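(* Let $G$ be a non-trivial finite group and let $P$ be a finite $G$-poset. Then $$\chi\left(\widetilde{C}_P\right)\leq \dim(P)+1.$$
   Context: A $G$-poset is a partially ordered set $(P,\preceq)$ together with an action of the group $G$ on $P$ that preserves the order: $x\preceq y \Rightarrow g\cdot x\preceq g\cdot y$. For $x\in P$ let $[x]=\{g\cdot x: g\in G\}$ be its orbit. The strong compatibility graph $\widetilde{C}_P$ is the simple graph with vertex set $P$ in which two elements $x,y\in P$ are adjacent if there is $g\in G\setminus\{e\}$ ($e$ the identity) such that $x$ and $g\cdot y$ are comparable in $P$, and $y\notin[x]$. The dimension $\dim(P)$ is the dimension of the order complex $\Delta(P)$ (the simplicial complex whose simplices are the chains of $P$), i.e. the maximum number of elements in a chain of $P$ minus one. $\chi$ denotes the chromatic number. *)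

From mathcomp Require Import all_boot all_order all_fingroup.
Set Implicit Arguments. Unset Strict Implicit. Unset Printing Implicit Defensive.
Import Order.Theory.
Local Open Scope order_scope.

(* A G-poset: finite poset T (finPOrderType) with a (right, mathcomp-style)
   action to of the finite group gT, g . x := to x g, preserving the order. *)
Definition order_preserving (d : Order.disp_t) (T : finPOrderType d)
  (gT : finGroupType) (to : {action gT &-> T}) : Prop :=
  forall (x y : T) (g : gT), x <= y -> to x g <= to y g.

Definition scg_adj (d : Order.disp_t) (T : finPOrderType d)
  (gT : finGroupType) (to : {action gT &-> T}) (x y : T) : bool :=
  [exists g : gT, (g != 1%g) && (x >=< to y g)]
  && (y \notin orbit to [set: gT] x).

(* Chains of P, and (dim P + 1) = maximal number of elements of a chain. *)
Definition is_chain (d : Order.disp_t) (T : finPOrderType d) (C : {set T}) : bool :=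
  [forall x in C, forall y in C, x >=< y].

Definition max_chain_size (d : Order.disp_t) (T : finPOrderType d) : nat :=
  \max_(C : {set T} | is_chain C) #|C|.

Definition proper_colouring (d : Order.disp_t) (T : finPOrderType d)
  (gT : finGroupType) (to : {action gT &-> T}) (k : nat) (f : T -> 'I_k) : Prop :=
  forall x y : T, scg_adj to x y -> f x != f y.

(* Colour each element by its height, the size of a longest chain with top
   element x, minus one.  The height is strictly monotone and invariant under
   the (order-preserving, invertible) action.  If x and y are adjacent, x is
   comparable with some g.y, and x <> g.y because y is not in the orbit of x;
   hence x and y get the colours of two distinct comparable elements, which
   differ. *)
From mathcomp Require Import all_boot all_order all_fingroup.
Set Implicit Arguments. Unset Strict Implicit. Unset Printing Implicit Defensive.
Import Order.Theory.

Section Height.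
Variables (d : Order.disp_t) (T : finPOrderType d).

Definition chain_below (x : T) (C : {set T}) : bool :=
  [&& is_chain C, x \in C & [forall z in C, (z <= x)%O]].

Definition height (x : T) : nat := \max_(C | chain_below x C) #|C|.

Lemma chain_below1 (x : T) : chain_below x [set x].
Proof.
rewrite /chain_below set11 /=; apply/andP; split.
  apply/forall_inP => a /set1P ->; apply/forall_inP => b /set1P ->.
  exact: comparablexx.
by apply/forall_inP => a /set1P ->.
Qed.

Lemma height_gt0 (x : T) : 0 < height x.
Proof. by apply: leq_trans (leq_bigmax_cond _ (chain_below1 x)); rewrite cards1. Qed.

Lemma height_le_max_chain (x : T) : height x <= max_chain_size T.
Proof. by apply/bigmax_leqP => C /and3P [chC _ _]; apply: leq_bigmax_cond. Qed.

Lemma height_witness (x : T) : exists2 C, chain_below x C & height x = #|C|.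
Proof.
have nonempty : 0 < #|[pred C | chain_below x C]|.
  by apply/card_gt0P; exists [set x]; rewrite inE chain_below1.
have [C] := eq_bigmax_cond (fun C : {set T} => #|C|) nonempty.
by rewrite inE; exists C.
Qed.

Lemma is_chain_imset (f : T -> T) (C : {set T}) :
  {homo f : a b / (a <= b)%O} -> is_chain C -> is_chain (f @: C).
Proof.
move=> f_mono chC; apply/forall_inP => _ /imsetP [a aC ->].
apply/forall_inP => _ /imsetP [b bC ->].
by case/orP: (forall_inP (forall_inP chC a aC) b bC) => /f_mono;
  [exact: le_comparable | exact: ge_comparable].
Qed.

Lemma is_chain_setU1 (y : T) (C : {set T}) :
  is_chain C -> (forall z, z \in C -> (y >=< z)%O) -> is_chain (y |: C).
Proof.
move=> chC ycmp; apply/forall_inP => a /setU1P [->|aC];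
  apply/forall_inP => b /setU1P [->|bC].
- exact: comparablexx.
- exact: ycmp.
- by rewrite comparable_sym ycmp.
- exact: (forall_inP (forall_inP chC a aC)).
Qed.

Lemma height_homo_inj (f : T -> T) (x : T) :
  injective f -> {homo f : a b / (a <= b)%O} -> height x <= height (f x).
Proof.
move=> f_inj f_mono; have [C /and3P [chC xC belowC] ->] := height_witness x.
rewrite -(card_imset _ f_inj); apply: leq_bigmax_cond; apply/and3P; split.
- exact: is_chain_imset.
- exact: imset_f.
- apply/forall_inP => _ /imsetP [z zC ->]; exact/f_mono/(forall_inP belowC).
Qed.

Lemma height_lt (x y : T) : (x < y)%O -> height x < height y.
Proof.
move=> ltxy; have [C /and3P [chC xC belowC] ->] := height_witness x.
have leCy z : z \in C -> (z <= y)%O.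
  by move=> zC; exact: le_trans (forall_inP belowC z zC) (ltW ltxy).
have yNC : y \notin C by apply: contraL ltxy => /(forall_inP belowC) /le_gtF ->.
have -> : (#|C|).+1 = #|y |: C| by rewrite cardsU1 yNC.
apply: leq_bigmax_cond; apply/and3P; split.
- by apply: is_chain_setU1 => // z /leCy; rewrite comparable_sym => /le_comparable.
- exact: setU11.
- by apply/forall_inP => z /setU1P [->|/leCy].
Qed.

Lemma height_inj_comparable (x y : T) :
  (x >=< y)%O -> height x = height y -> x = y.
Proof.
case/comparable_ltgtP => [/height_lt|/height_lt|//] lt_h eq_h;
  by rewrite eq_h ltnn in lt_h.
Qed.

End Height.

Section Colouring.
Variables (gT : finGroupType) (d : Order.disp_t) (T : finPOrderType d)
  (to : {action gT &-> T}).

Lemma height_act (x : T) (g : gT) :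
  order_preserving to -> height (to x g) = height x.
Proof.
move=> to_mono; have le_h y h : height y <= height (to y h).
  apply: (height_homo_inj (f := to^~ h)) => [|a b]; first exact: act_inj.
  exact: to_mono.
by apply/eqP; rewrite eqn_leq le_h -{2}(actK to g x) le_h.
Qed.

Lemma proper_colouring_invariant (k : nat) (f : T -> 'I_k) :
  (forall x g, f (to x g) = f x) ->
  (forall x y, (x >=< y)%O -> f x = f y -> x = y) ->
  proper_colouring to f.
Proof.
move=> f_inv f_inj x y /andP [/existsP [g /andP [_ cmp]] yNorb].
apply/eqP => fxy; move/negP: yNorb; apply.
have <- : to (to y g) g^-1%g = y by rewrite actK.
by rewrite (f_inj _ _ cmp) ?f_inv // mem_orbit ?in_setT.
Qed.

End Colouring.

Theorem lemma7 (gT : finGroupType) (d : Order.disp_t) (T : finPOrderType d)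
  (to : {action gT &-> T}) :
  1 < #|[set: gT]| ->
  order_preserving to ->
  exists f : T -> 'I_(max_chain_size T), proper_colouring to f.
Proof.
move=> _ to_mono.
have colour_lt (x : T) : (height x).-1 < max_chain_size T.
  by case: (height x) (height_gt0 x) (height_le_max_chain x).
exists (fun x => Ordinal (colour_lt x)); apply: proper_colouring_invariant.
- by move=> x g; apply: val_inj => /=; rewrite height_act.
- move=> x y cmp /(congr1 (fun i => (nat_of_ord i).+1)) /=.
  by rewrite !prednK ?height_gt0 //; exact: height_inj_comparable.
Qed.
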